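(* Let $\mathbb{F}\in\{\mathbb{R},\mathbb{C}\}$, let $\Phi=\{\varphi_i\}_{i=1}^M$ be a Parseval frame for $\mathbb{F}^N$ and let $\Psi=\{\psi_i\}_{i=1}^M$ be a Naimark complement of $\Phi$. Let $k\leq\min\{N,M-N\}$. If $v_k(\Phi_K)=c_{M,N,k}$ for every $K\subseteq[M]$ with $|K|=k$, then $v_k(\Psi_K)=c_{M,M-N,k}$ for every $K\subseteq[M]$ with $|K|=k$.
   Context: A Parseval frame for $\mathbb{F}^N$ is a family $\{\varphi_i\}_{i=1}^M\subseteq\mathbb{F}^N$ whose $N\times M$ matrix $\Phi$ (columns $\varphi_i$) satisfies $\Phi\Phi^*=I$. A Naimark complement of $\Phi$ is any $\Psi=\{\psi_i\}_{i=1}^M\subseteq\mathbb{F}^{M-N}$ with $\Psi^*\Psi=I-\Phi^*\Phi$. For $K\subseteq[M]$, $\Phi_K$ is the submatrix of columns indexed by $K$; $v_k(F)=\sqrt{\det(F^*F)}$; and $c_{M,N,k}=\sqrt{{M\choose k}^{-1}{N\choose k}}$. *)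

From HB Require Import structures.
From mathcomp Require Import all_boot all_order all_algebra.
Set Implicit Arguments. Unset Strict Implicit. Unset Printing Implicit Defensive.
Import Order.TTheory GRing.Theory Num.Theory.
Local Open Scope ring_scope.

(* Complex case: scalars in a numeric closed field C (e.g. algC, complex R). *)
Definition adjC (C : numClosedFieldType) m n (A : 'M[C]_(m, n)) : 'M[C]_(n, m) :=
  map_mx Num.conj A^T.

(* Phi_K : the columns of Phi indexed by K (in increasing order). *)
Definition colsubset (T : Type) m n (K : {set 'I_n}) (A : 'M[T]_(m, n))
  : 'M[T]_(m, #|K|) := colsub (@enum_val _ (mem K)) A.

Definition parsevalC (C : numClosedFieldType) N M (Phi : 'M[C]_(N, M)) : Prop :=
  Phi *m adjC Phi = 1%:M.
Definition naimarkC (C : numClosedFieldType) N M (Phi : 'M[C]_(N, M))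
  (Psi : 'M[C]_(M - N, M)) : Prop :=
  adjC Psi *m Psi = 1%:M - adjC Phi *m Phi.
Definition vkC (C : numClosedFieldType) m n (F : 'M[C]_(m, n)) : C :=
  sqrtC (\det (adjC F *m F)).
Definition cC (C : numClosedFieldType) (M N k : nat) : C :=
  sqrtC (('C(M, k))%:R^-1 * ('C(N, k))%:R).

(* Real case: scalars in a real closed field R; the adjoint is the transpose. *)
Definition parsevalR (R : rcfType) N M (Phi : 'M[R]_(N, M)) : Prop :=
  Phi *m Phi^T = 1%:M.
Definition naimarkR (R : rcfType) N M (Phi : 'M[R]_(N, M))
  (Psi : 'M[R]_(M - N, M)) : Prop :=
  Psi^T *m Psi = 1%:M - Phi^T *m Phi.
Definition vkR (R : rcfType) m n (F : 'M[R]_(m, n)) : R :=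
  Num.sqrt (\det (F^T *m F)).
Definition cR (R : rcfType) (M N k : nat) : R :=
  Num.sqrt (('C(M, k))%:R^-1 * ('C(N, k))%:R).

(* Write the Gram matrix of Phi as G = A B with B A = 1 (A = Phi^*, B = Phi); the Gram
   matrix of a Naimark complement is then 1 - G, and v_k(Phi_K)^2, v_k(Psi_K)^2 are the
   principal minors of G and 1 - G on K.  Sylvester's identity det (1 + U V) = det (1 + V U)
   evaluates the generating polynomials of principal minors:
     sum_(T >= J) det G_T X^(M - |T|) = X^(M - N) (X + 1)^(N - |J|) det G_J,
     sum_T det (1 - G)_T X^(M - |T|) = X^N (X + 1)^(M - N).
   Comparing coefficients in the first identity shows that if all k x k principal minors
   of G are equal, then for every j <= k so are all j x j ones.  Expanding
   det (1 - G)_K = sum_(T <= K) (-1)^|T| det G_T then makes all k x k principal minors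
   of 1 - G equal, and the second identity gives their common value C(M-N,k) / C(M,k). *)

From mathcomp Require Import all_boot all_order all_algebra.
From mathcomp Require Import ring zify.
Import Order.TTheory GRing.Theory Num.Theory.
Set Implicit Arguments. Unset Strict Implicit. Unset Printing Implicit Defensive.
Local Open Scope ring_scope.

Lemma det1D_mulmxC (R : comPzRingType) m n (A : 'M[R]_(m, n)) (B : 'M[R]_(n, m)) :
  \det (1%:M + A *m B) = \det (1%:M + B *m A).
Proof.
have eL : block_mx 1%:M (-A) B 1%:M =
    block_mx 1%:M 0 B 1%:M *m block_mx 1%:M (-A) 0 (1%:M + B *m A).
  by rewrite mulmx_block !mul1mx !mul0mx !mulmx1 !addr0 mulmxN addrCA addNr addr0.
have eR : block_mx 1%:M (-A) B 1%:M =
    block_mx (1%:M + A *m B) (-A) 0 1%:M *m block_mx 1%:M 0 B 1%:M.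
  by rewrite mulmx_block !mul1mx !mul0mx !mulmx1 !mulmx0 !add0r mulNmx addrK.
have := congr1 determinant (etrans (esym eL) eR).
by rewrite !det_mulmx det_ublock det_lblock !det1 !mul1r !mulr1 det_ublock det1 mulr1.
Qed.

Lemma det_scalarD_mulmxC (F : fieldType) m n (t : F) (A : 'M[F]_(m, n)) (B : 'M[F]_(n, m)) :
  t != 0 -> \det (t%:M + A *m B) * t ^+ n = t ^+ m * \det (t%:M + B *m A).
Proof.
move=> t0.
have scale p q (P : 'M[F]_(p, q)) (Q : 'M[F]_(q, p)) :
    t%:M + P *m Q = t *: (1%:M + (t^-1 *: P) *m Q).
  by rewrite scalerDr scalemx1 -scalemxAl scalerA divff // scale1r.
rewrite (scale _ _ A B) (scale _ _ B A) !detZ det1D_mulmxC -!scalemxAl -!scalemxAr.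
by rewrite mulrAC -mulrA.
Qed.

Lemma det_block_scalar (F : fieldType) n1 n2 (a : F) (Bu : 'M[F]_(n1, n2))
    (Cl : 'M[F]_(n2, n1)) (D : 'M[F]_n2) : a != 0 ->
  \det (block_mx a%:M Bu Cl D) = a ^+ n1 * \det (D - a^-1 *: (Cl *m Bu)).
Proof.
move=> a0.
have -> : block_mx a%:M Bu Cl D =
    block_mx 1%:M 0 (a^-1 *: Cl) 1%:M *m block_mx a%:M Bu 0 (D - a^-1 *: (Cl *m Bu)).
  rewrite mulmx_block !mul1mx !mul0mx !addr0 mul_mx_scalar scalerA mulfV // scale1r.
  by rewrite -scalemxAl addrC subrK.
by rewrite det_mulmx det_lblock det_ublock !det1 !mul1r det_scalar.
Qed.

Lemma card_supsets (T : finType) (J : {set T}) k : (k <= #|T|)%N ->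
  #|[set A : {set T} | (J \subset A) && (#|A| == k)]| = 'C(#|T| - #|J|, #|T| - k).
Proof.
move=> leq_kT; have cardC (A : {set T}) : #|~: A| = (#|T| - #|A|)%N.
  by rewrite -(cardsC A) addKn.
rewrite -cardC -cards_draws -(card_imset _ (@setC_inj T)); apply: eq_card => A.
rewrite inE; apply/imsetP/andP => [[B]|[AJ /eqP cardA]].
  by rewrite inE => /andP[JB /eqP cardB] ->; rewrite setCS JB cardC cardB.
exists (~: A); rewrite ?setCK // inE -setCS setCK AJ cardC cardA.
by rewrite subKn ?eqxx.
Qed.

Section PrincipalMinors.
Variables (R : comPzRingType) (M : nat).
Implicit Types (T K : {set 'I_M}) (X : 'M[R]_M).

Definition sel K : 'M[R]_(M, #|K|) := colsub (@enum_val _ (mem K)) 1%:M.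

Definition pminor K X : R :=
  \det (mxsub (@enum_val _ (mem K)) (@enum_val _ (mem K)) X).

Lemma trmx_sel_mulmx K X :
  (sel K)^T *m X *m sel K = mxsub (@enum_val _ (mem K)) (@enum_val _ (mem K)) X.
Proof.
by rewrite trmx_mxsub trmx1 mul_rowsub_mx mul1mx mulmx_colsub mulmx1 -mxsubcr.
Qed.

Lemma trmx_sel_sel K : (sel K)^T *m sel K = 1%:M.
Proof.
rewrite -[_^T]mulmx1 trmx_sel_mulmx.
by apply/matrixP => i j; rewrite !mxE (inj_eq enum_val_inj).
Qed.

Definition indicator_mx K : 'M[R]_M := diag_mx (\row_i (i \in K)%:R).

Lemma sel_mul_trmx K : sel K *m (sel K)^T = indicator_mx K.
Proof.
apply/matrixP => i i'; rewrite !mxE.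
under eq_bigr do rewrite !mxE.
case: (boolP (i \in K)) => iK; last first.
  rewrite big1 ?mul0rn // => j _.
  have /negPf -> : i != enum_val j by apply: contraNneq iK => ->; apply: enum_valP.
  by rewrite mul0r.
rewrite (bigD1 (enum_rank_in iK i)) //= enum_rankK_in // eqxx mul1r big1 ?addr0.
  by rewrite mulr1n eq_sym.
move=> j /negPf nj; rewrite -[i in i == _](enum_rankK_in iK iK) (inj_eq enum_val_inj).
by rewrite eq_sym nj mul0r.
Qed.

(* Padding with the identity keeps the size [M], so that minors on [K] and on [K :\ i0]
   can be compared by expanding along row [i0]. *)
Definition padmx K X : 'M[R]_M :=
  \matrix_(i, j) if (i \in K) && (j \in K) then X i j else (i == j)%:R.

Lemma padmxE K X :
  padmx K X = 1%:M + indicator_mx K *m (X - 1%:M) *m indicator_mx K.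
Proof.
apply/matrixP => i j; rewrite mul_mx_diag mul_diag_mx !mxE.
case: (i \in K); case: (j \in K); rewrite /= ?mul0r ?mulr0 ?mul1r ?mulr1 ?addr0 //.
by rewrite addrC subrK.
Qed.

Lemma det_padmx K X : \det (padmx K X) = pminor K X.
Proof.
rewrite padmxE -sel_mul_trmx -!mulmxA det1D_mulmxC -!mulmxA trmx_sel_sel mulmx1.
by rewrite mulmxBl mulmxBr mul1mx trmx_sel_sel mulmxA addrC subrK /pminor trmx_sel_mulmx.
Qed.

Lemma det_unit_row n (A : 'M[R]_n) i0 :
  (forall j, A i0 j = (j == i0)%:R) -> \det A = cofactor A i0 i0.
Proof.
move=> Ai0; rewrite (expand_det_row _ i0) (bigD1 i0) //= Ai0 eqxx mul1r big1 ?addr0 //.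
by move=> j /negPf nj; rewrite Ai0 nj mul0r.
Qed.

Lemma pminorD_delta K X i0 c : i0 \in K ->
  pminor K (X + c *: delta_mx i0 i0) = pminor K X + c * pminor (K :\ i0) X.
Proof.
move=> i0K; rewrite -!det_padmx.
pose C := \matrix_(r, s) if r == i0 then (s == i0)%:R else padmx K X r s.
have liftF r : (lift i0 r == i0) = false by apply/negbTE; rewrite eq_sym neq_lift.
have -> : \det (padmx (K :\ i0) X) = \det C.
  have unitC j : C i0 j = (j == i0)%:R by rewrite mxE eqxx.
  have unitP j : padmx (K :\ i0) X i0 j = (j == i0)%:R.
    by rewrite !mxE !inE eqxx /= eq_sym.
  rewrite (det_unit_row unitC) (det_unit_row unitP); congr (_ * \det _).
  by apply/matrixP => r s; rewrite !mxE !inE !liftF.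
rewrite -[\det (padmx K X)]mul1r; apply: (determinant_multilinear (i0 := i0)).
- apply/rowP => s; rewrite !mxE eqxx i0K /=.
  case: (boolP (s \in K)) => sK; rewrite /= ?eqxx ?mulr1 ?mul1r [s == i0]eq_sym //.
  have /negPf -> : i0 != s by apply: contraNneq sK => <-.
  by rewrite mulr0 addr0.
- by apply/matrixP => r s; rewrite !mxE liftF /= mulr0 addr0.
- by apply/matrixP => r s; rewrite !mxE liftF /= mulr0 addr0.
Qed.

Lemma pminorD_delta_notin K X i0 c : i0 \notin K ->
  pminor K (X + c *: delta_mx i0 i0) = pminor K X.
Proof.
move=> i0K; congr (\det _); apply/matrixP => j l; rewrite !mxE.
have /negPf -> : enum_val j != i0 by apply: contraNneq i0K => <-; apply: enum_valP.
by rewrite mulr0 addr0.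
Qed.

Lemma sum_subsets_prod_setD1 K i0 (d : 'I_M -> R) (f : {set 'I_M} -> R) :
  i0 \in K ->
  \sum_(T : {set 'I_M} | T \subset K) (\prod_(i in K :\: T) d i) * f T =
  \sum_(T : {set 'I_M} | T \subset K) (\prod_(i in K :\: T) [eta d with i0 |-> 0] i) * f T
  + d i0 * \sum_(T : {set 'I_M} | T \subset K :\ i0)
             (\prod_(i in K :\ i0 :\: T) [eta d with i0 |-> 0] i) * f T.
Proof.
move=> i0K.
pose has_i0 (T : {set 'I_M}) := i0 \in T.
rewrite [LHS](bigID has_i0) [X in X + _](bigID has_i0) /=.
rewrite [X in _ + X + _]big1 ?addr0 => [|T /andP[_ i0T]]; last first.
  have i0KT : i0 \in K :\: T by rewrite inE i0T i0K.
  by rewrite (big_setD1 _ i0KT) /= eqxx !mul0r.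
congr (_ + _).
  apply: eq_bigr => T /andP[_ i0T]; congr (_ * _); apply: eq_bigr => i /setDP[_ iT] /=.
  by have /negPf -> : i != i0 by apply: contraNneq iT => ->.
rewrite big_distrr /=; apply: eq_big => [T|T]; first by rewrite subsetD1.
move=> /andP[TK i0T]; have i0KT : i0 \in K :\: T by rewrite inE i0T i0K.
rewrite (big_setD1 _ i0KT) mulrA; congr (_ * _ * _).
have -> : K :\: T :\ i0 = K :\ i0 :\: T by apply/setP => i; rewrite !inE andbCA.
by apply: eq_bigr => i; rewrite !inE => /andP[_ /andP[/negPf -> _]].
Qed.

Lemma pminor_diagD K (d : 'I_M -> R) X :
  pminor K (diag_mx (\row_i d i) + X) =
  \sum_(T : {set 'I_M} | T \subset K) (\prod_(i in K :\: T) d i) * pminor T X.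
Proof.
have [s supp_d] : exists s : seq 'I_M, forall i, i \notin s -> d i = 0.
  by exists (enum 'I_M) => i; rewrite mem_enum.
elim: s d supp_d K => [|i0 s IHs] d supp_d K.
  have -> : diag_mx (\row_i d i) = 0 by apply/matrixP => i j; rewrite !mxE supp_d ?mul0rn.
  rewrite add0r (bigD1 K) //= setDv big_set0 mul1r big1 ?addr0 // => T /andP[TK TnK].
  have /set0Pn[i iKT] : K :\: T != set0.
    by rewrite setD_eq0; apply: contra TnK => KT; rewrite eqEsubset TK.
  by rewrite (big_setD1 _ iKT) /= supp_d ?mul0r.
set d' := [eta d with i0 |-> 0].
have supp_d' i : i \notin s -> d' i = 0.
  by rewrite /d' /=; case: eqP => // ne si; rewrite supp_d // inE negb_or si andbT; apply/eqP.
have -> : diag_mx (\row_i d i) + X = diag_mx (\row_i d' i) + X + d i0 *: delta_mx i0 i0.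
  apply/matrixP => i j; rewrite !mxE /d' /=.
  case: (eqVneq i i0) => [->|ne]; last by rewrite mulr0 addr0.
  by case: (eqVneq i0 j) => [<-|_]; rewrite ?mulr0 ?mulr1 ?addr0 // add0r addrC.
have [i0K|i0nK] := boolP (i0 \in K).
  by rewrite pminorD_delta // !IHs // (sum_subsets_prod_setD1 d _ i0K).
rewrite pminorD_delta_notin // IHs //; apply: eq_bigr => T _; congr (_ * _).
apply: eq_bigr => i /setDP[iK _] /=.
by have /negPf -> : i != i0 by apply: contraNneq i0nK => <-.
Qed.

Lemma pminor_setT X : pminor [set: 'I_M] X = \det X.
Proof. by rewrite -det_padmx; congr (\det _); apply/matrixP => i j; rewrite !mxE !inE. Qed.

Lemma pminorN K X : pminor K (- X) = (-1) ^+ #|K| * pminor K X.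
Proof.
rewrite /pminor -detZ; congr (\det _).
by apply/matrixP => i j; rewrite !mxE mulN1r.
Qed.

Lemma sum_subsets_card K (g : nat -> R) :
  \sum_(T : {set 'I_M} | T \subset K) g #|T| = \sum_(j < M.+1) 'C(#|K|, j)%:R * g j.
Proof.
rewrite (partition_big (fun T : {set 'I_M} => inord #|T| : 'I_M.+1) predT) //=.
apply: eq_bigr => j _.
have cardT (T : {set 'I_M}) : (inord #|T| == j :> 'I_M.+1) = (#|T| == j).
  by rewrite -(inj_eq val_inj) /= inordK // ltnS -[X in (_ <= X)%N](card_ord M) max_card.
rewrite (eq_bigr (fun _ => g j)) => [|T /andP[_]]; last by rewrite cardT => /eqP ->.
rewrite (eq_bigl [in [set T : {set 'I_M} | (T \subset K) && (#|T| == j)]]).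
  by rewrite sumr_const cards_draws mulr_natl.
by move=> T; rewrite !inE cardT.
Qed.

Lemma pminor1B_card k (alpha : nat -> R) X :
  (forall T, (#|T| <= k)%N -> pminor T X = alpha #|T|) ->
  forall K, #|K| = k ->
  pminor K (1%:M - X) = \sum_(j < M.+1) 'C(k, j)%:R * ((-1) ^+ j * alpha j).
Proof.
move=> alphaX K cardK.
have -> : 1%:M - X = diag_mx (\row_i 1) - X.
  by rewrite -diag_const_mx; congr (diag_mx _ - _); apply/rowP => i; rewrite !mxE.
rewrite pminor_diagD -cardK -(sum_subsets_card K (fun j => (-1) ^+ j * alpha j)).
apply: eq_bigr => T TK.
by rewrite prodr_const expr1n mul1r pminorN alphaX // -cardK subset_leq_card.
Qed.
End PrincipalMinors.

Section MinorPolynomial.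
Variables (F : numFieldType) (M : nat).
Implicit Types (J T : {set 'I_M}) (X : 'M[F]_M).

Lemma poly_eq_pos (p q : {poly F}) :
  (forall x : F, 0 < x -> p.[x] = q.[x]) -> p = q.
Proof.
move=> pq; apply/eqP; rewrite -subr_eq0; apply/eqP.
apply: (@roots_geq_poly_eq0 _ _ [seq n.+1%:R | n <- iota 0 (size (p - q))]).
- by apply/allP => x /mapP[n _ ->]; rewrite rootE hornerD hornerN pq ?subrr ?ltr0Sn.
- by rewrite map_inj_uniq ?iota_uniq // => m n /eqP; rewrite eqr_nat => /eqP[].
- by rewrite size_map size_iota.
Qed.

Lemma coefXD1n n i : (('X + 1) ^+ n)`_i = 'C(n, i)%:R :> F.
Proof.
rewrite exprD1n coef_sum.
have [ltni|leni] := ltnP n i.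
  rewrite bin_small // big1 // => l _; rewrite coefMn coefXn.
  by rewrite gtn_eqF ?mul0rn // (leq_trans (ltn_ord l)).
rewrite (bigD1 (Ordinal (leni : i < n.+1)%N)) //= coefMn coefXn eqxx big1 ?addr0 //.
move=> l nl; rewrite coefMn coefXn.
have /negPf -> : i != l by apply: contraNneq nl => il; apply/eqP/val_inj.
by rewrite mul0rn.
Qed.

Definition minor_poly J X : {poly F} :=
  \sum_(T : {set 'I_M} | J \subset T) pminor T X *: 'X^(M - #|T|).

Lemma horner_minor_poly J X (t : F) :
  (minor_poly J X).[t] = \det (diag_mx (\row_i (if i \in J then 0 else t)) + X).
Proof.
rewrite -pminor_setT pminor_diagD horner_sum big_mkcond /=.
rewrite [RHS](eq_bigl predT) => [|T]; last exact: subsetT.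
apply: eq_bigr => T _; case: (boolP (J \subset T)) => JT; last first.
  by case/subsetPn: JT => i iJ iT; rewrite (big_setD1 i) ?inE ?iT //= iJ !mul0r.
rewrite hornerZ hornerXn mulrC; congr (_ * _).
rewrite (eq_bigr (fun _ => t)) => [|i]; last first.
  by rewrite !inE andbT => iT; case: ifP => // iJ; rewrite (subsetP JT) in iT.
by rewrite prodr_const setTD [#|~: T|]cardsCs setCK card_ord.
Qed.

Lemma coef_minor_poly J X k : (k <= M)%N ->
  (minor_poly J X)`_(M - k) =
  \sum_(T : {set 'I_M} | (J \subset T) && (#|T| == k)) pminor T X.
Proof.
move=> leq_kM; rewrite coef_sum big_mkcondr /=; apply: eq_bigr => T _.
have leq_TM : (#|T| <= M)%N by rewrite -[X in (_ <= X)%N](card_ord M) max_card.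
rewrite coefZ coefXn.
case: (eqVneq #|T| k) => [->|ne]; first by rewrite eqxx mulr1.
by rewrite (_ : (M - k == M - #|T|)%N = false) ?mulr0 //; apply/eqP; lia.
Qed.
End MinorPolynomial.

Section Projection.
Variables (F : numFieldType) (M N : nat) (A : 'M[F]_(M, N)) (B : 'M[F]_(N, M)).
Hypothesis BA1 : B *m A = 1%:M.
Implicit Types (J K T : {set 'I_M}).

Lemma proj_dim_leq : (N <= M)%N.
Proof.
have := mxrankM_maxl B A; rewrite BA1 mxrank1 => /leq_trans; apply.
exact: rank_leq_col.
Qed.

(* The matrix is a rank-[N + #|J|] perturbation of [t%:M], so Sylvester's identity turns
   its determinant into a block determinant of size [N + #|J|]. *)
Lemma det_diagD_proj J (t : F) : t != 0 -> t + 1 != 0 -> (#|J| <= N)%N ->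
  \det (diag_mx (\row_i (if i \in J then 0 else t)) + A *m B) =
  t ^+ (M - N) * (t + 1) ^+ (N - #|J|) * pminor J (A *m B).
Proof.
move=> t0 t1 leq_JN; set E := sel F J.
have diagE : diag_mx (\row_i (if i \in J then 0 else t)) = t%:M - t *: (E *m E^T).
  rewrite sel_mul_trmx; apply/matrixP => i j; rewrite !mxE.
  by case: (i \in J); case: (i == j); rewrite ?mulr1 ?mulr0 ?subrr ?subr0.
have lowrank : diag_mx (\row_i (if i \in J then 0 else t)) + A *m B =
    t%:M + row_mx A E *m col_mx B (- t *: E^T).
  by rewrite mul_row_col diagE -scalemxAr scaleNr -addrA [_ + A *m B]addrC.
have : \det (t%:M + row_mx A E *m col_mx B (- t *: E^T)) * t ^+ (N + #|J|) =
       t ^+ M * ((t + 1) ^+ N * (t / (t + 1)) ^+ #|J| * pminor J (A *m B)).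
  rewrite det_scalarD_mulmxC // mul_col_row scalar_mx_block add_block_mx BA1.
  rewrite -(scalemxAl (-t) E^T E) trmx_sel_sel scalemx1 -!raddfD /= addrN !add0r.
  rewrite det_block_scalar // (_ : 0%:M - _ = (t / (t + 1)) *: (E^T *m (A *m B) *m E)).
    by rewrite detZ trmx_sel_mulmx !mulrA /pminor.
  by rewrite raddf0 sub0r -!scalemxAl scalerA !mulmxA -scaleNr mulrN opprK mulrC.
rewrite lowrank => key; apply: (mulIf (expf_neq0 (N + #|J|) t0)); rewrite key.
have -> : t ^+ M = t ^+ (M - N) * t ^+ N by rewrite -exprD subnK ?proj_dim_leq.
have -> : (t + 1) ^+ N = (t + 1) ^+ (N - #|J|) * (t + 1) ^+ #|J|.
  by rewrite -exprD subnK.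
by rewrite expr_div_n exprD; field; rewrite expf_neq0.
Qed.

Lemma sum_pminor_proj_supsets J k : (#|J| <= k)%N -> (k <= N)%N ->
  \sum_(T : {set 'I_M} | (J \subset T) && (#|T| == k)) pminor T (A *m B) =
  'C(N - #|J|, N - k)%:R * pminor J (A *m B).
Proof.
move=> leq_Jk leq_kN; have leq_NM := proj_dim_leq.
rewrite -coef_minor_poly; last by lia.
have -> : minor_poly J (A *m B) =
    'X^(M - N) * ('X + 1) ^+ (N - #|J|) * (pminor J (A *m B))%:P.
  apply: poly_eq_pos => t t_gt0.
  rewrite horner_minor_poly det_diagD_proj; last 3 first.
  - exact: lt0r_neq0.
  - exact/lt0r_neq0/addr_gt0.
  - exact: leq_trans leq_kN.
  by rewrite !hornerE.
rewrite coefMC coefXnM ifN; last by rewrite -leqNgt; lia.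
rewrite (_ : M - k - (M - N) = N - k)%N; last by lia.
by rewrite coefXD1n mulrC.
Qed.

Lemma det_scalarD_coproj (t : F) : t + 1 != 0 ->
  \det (t%:M + (1%:M - A *m B)) = t ^+ N * (t + 1) ^+ (M - N).
Proof.
move=> t1; have -> : t%:M + (1%:M - A *m B) = (t + 1)%:M + (- A) *m B.
  by rewrite raddfD /= addrA mulNmx.
apply: (mulIf (expf_neq0 N t1)); rewrite det_scalarD_mulmxC // mulmxN BA1.
rewrite -raddfN -raddfD /= addrK det_scalar -{1}(subnK proj_dim_leq) exprD.
by rewrite mulrC mulrA.
Qed.

Lemma sum_pminor_coproj k : (k <= M - N)%N ->
  \sum_(T : {set 'I_M} | #|T| == k) pminor T (1%:M - A *m B) = 'C(M - N, k)%:R.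
Proof.
move=> leq_k; have leq_NM := proj_dim_leq.
rewrite (eq_bigl (fun T => (set0 \subset T) && (#|T| == k))) => [|T]; last by rewrite sub0set.
rewrite -coef_minor_poly; last by lia.
have -> : minor_poly set0 (1%:M - A *m B) = 'X^N * ('X + 1) ^+ (M - N).
  apply: poly_eq_pos => t t_gt0; rewrite horner_minor_poly.
  have -> : diag_mx (\row_i (if i \in set0 then 0 else t)) = t%:M :> 'M_M.
    by apply/matrixP => i j; rewrite !mxE inE.
  by rewrite det_scalarD_coproj ?hornerE //; exact/lt0r_neq0/addr_gt0.
rewrite coefXnM ifN; last by rewrite -leqNgt; lia.
rewrite (_ : M - k - N = M - N - k)%N; last by lia.
by rewrite coefXD1n bin_sub.
Qed.

Lemma pminor_proj_card k c : (k <= N)%N ->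
  (forall T, #|T| = k -> pminor T (A *m B) = c) ->
  forall J, (#|J| <= k)%N ->
  pminor J (A *m B) = 'C(M - #|J|, M - k)%:R / 'C(N - #|J|, N - k)%:R * c.
Proof.
move=> leq_kN pminor_k J leq_Jk; have leq_NM := proj_dim_leq.
have binN : 'C(N - #|J|, N - k)%:R != 0 :> F by rewrite pnatr_eq0 -lt0n bin_gt0; lia.
apply: (mulfI binN); rewrite -sum_pminor_proj_supsets //.
rewrite (eq_bigr (fun _ => c)) => [|T /andP[_ /eqP]]; last exact: pminor_k.
rewrite (eq_bigl [in [set T : {set 'I_M} | (J \subset T) && (#|T| == k)]]) => [|T]; last first.
  by rewrite inE.
rewrite sumr_const card_supsets card_ord; last by lia.
by rewrite -mulr_natl; field.
Qed.

Lemma pminor_coproj_card k c : (k <= N)%N -> (k <= M - N)%N ->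
  (forall T, #|T| = k -> pminor T (A *m B) = c) ->
  forall K, #|K| = k -> pminor K (1%:M - A *m B) = 'C(M - N, k)%:R / 'C(M, k)%:R.
Proof.
move=> leq_kN leq_kMN pminor_k.
pose alpha j := 'C(M - j, M - k)%:R / 'C(N - j, N - k)%:R * c.
have := @pminor1B_card _ _ k alpha _ (pminor_proj_card leq_kN pminor_k).
set beta := \sum_(j < M.+1) _ => pminor_beta.
have := sum_pminor_coproj leq_kMN.
rewrite (eq_bigr (fun _ => beta)) => [|T /eqP]; last exact: pminor_beta.
rewrite (eq_bigl [in [set T : {set 'I_M} | #|T| == k]]) => [|T]; last by rewrite inE.
rewrite sumr_const card_draws card_ord => sum_beta K cardK.
rewrite pminor_beta // -sum_beta -[beta *+ _]mulr_natr mulfK // pnatr_eq0 -lt0n bin_gt0; lia.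
Qed.
End Projection.

Lemma vkR_colsubset (R : rcfType) m n (K : {set 'I_n}) (X : 'M[R]_(m, n)) :
  vkR (colsubset K X) = Num.sqrt (pminor K (X^T *m X)).
Proof. by rewrite /vkR /colsubset /pminor trmx_mxsub -mxsub_mul. Qed.

Lemma vkC_colsubset (C : numClosedFieldType) m n (K : {set 'I_n}) (X : 'M[C]_(m, n)) :
  vkC (colsubset K X) = sqrtC (pminor K (adjC X *m X)).
Proof. by rewrite /vkC /colsubset /pminor /adjC trmx_mxsub map_mxsub -mxsub_mul. Qed.

Lemma sqrtr_eq_pos (R : rcfType) (x c : R) : 0 < c -> Num.sqrt x = Num.sqrt c -> x = c.
Proof.
move=> c_gt0 sqrt_xc; have x_gt0 : 0 < x by rewrite -sqrtr_gt0 sqrt_xc sqrtr_gt0.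
by apply/eqP; rewrite -eqr_sqrt ?ltW // sqrt_xc.
Qed.

Theorem proposition12 :
  (forall (R : rcfType) (N M k : nat) (Phi : 'M[R]_(N, M)) (Psi : 'M[R]_(M - N, M)),
     parsevalR Phi -> naimarkR Phi Psi -> (k <= minn N (M - N))%N ->
     (forall K : {set 'I_M}, #|K| = k -> vkR (colsubset K Phi) = cR R M N k) ->
     forall K : {set 'I_M}, #|K| = k -> vkR (colsubset K Psi) = cR R M (M - N) k)
  /\
  (forall (C : numClosedFieldType) (N M k : nat) (Phi : 'M[C]_(N, M))
          (Psi : 'M[C]_(M - N, M)),
     parsevalC Phi -> naimarkC Phi Psi -> (k <= minn N (M - N))%N ->
     (forall K : {set 'I_M}, #|K| = k -> vkC (colsubset K Phi) = cC C M N k) ->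
     forall K : {set 'I_M}, #|K| = k -> vkC (colsubset K Psi) = cC C M (M - N) k).
Proof.
split=> [R|C] N M k Phi Psi parseval naimark; rewrite leq_min => /andP[leq_kN leq_kMN] vk_Phi.
- rewrite /cR => K cardK; rewrite vkR_colsubset naimark mulrC.
  rewrite (pminor_coproj_card parseval leq_kN leq_kMN (c := 'C(M, k)%:R^-1 * 'C(N, k)%:R)) //.
  move=> T cardT; apply: sqrtr_eq_pos.
    by rewrite mulr_gt0 ?invr_gt0 ?ltr0n ?bin_gt0 // (leq_trans leq_kMN (leq_subr _ _)).
  by have := vk_Phi T cardT; rewrite vkR_colsubset.
- rewrite /cC => K cardK; rewrite vkC_colsubset naimark mulrC.
  rewrite (pminor_coproj_card parseval leq_kN leq_kMN (c := 'C(M, k)%:R^-1 * 'C(N, k)%:R)) //.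
  by move=> T cardT; apply: sqrtC_inj; have := vk_Phi T cardT; rewrite vkC_colsubset.
Qed.
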